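(* Let $\Phi$ be a finite crystallographic root system and let $\Psi,\Psi'\subseteq\Phi^+$ be such that $\operatorname{ord}(\beta,\gamma)=2$ for all $\beta\in\Psi$ and $\gamma\in\Psi'$. Then the families of random variables $\{\mathcal{X}_\beta\}_{\beta\in\Psi}$ and $\{\mathcal{X}_\gamma\}_{\gamma\in\Psi'}$ are independent.
   Context: $\Phi$ is a finite crystallographic root system with positive roots $\Phi^+$ and Weyl group $W$; $s_\beta$ is the reflection in $\beta$ and $\operatorname{ord}(\beta,\gamma)=\min\{k>0:(s_\beta s_\gamma)^k=e\}$ (so $\operatorname{ord}(\beta,\gamma)=2$ means $\beta\ne\gamma$ are orthogonal). For $\beta\in\Phi^+$, $\mathcal{X}_\beta$ is the Bernoulli random variable on $W$ with the uniform distribution, $\mathcal{X}_\beta(w)=1$ if $w(\beta)\in-\Phi^+$ and $0$ otherwise. *)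

From HB Require Import structures.
From mathcomp Require Import all_boot all_order all_algebra.
From mathcomp Require Import reals.
Set Implicit Arguments. Unset Strict Implicit. Unset Printing Implicit Defensive.
Import Order.TTheory GRing.Theory Num.Theory.
Local Open Scope ring_scope.

Section RootSystems.
Variables (R : realType) (n : nat).

Definition dotv (u v : 'rV[R]_n) : R := (u *m v^T) 0 0.

(* Matrix of the reflection s_a (acting on row vectors by v |-> v *m s_a):
   v *m refl_mx a = v - (2 (v,a)/(a,a)) a. *)
Definition refl_mx (a : 'rV[R]_n) : 'M[R]_n :=
  1%:M - (2 / dotv a a) *: (a^T *m a).

Definition root_system (Phi : seq 'rV[R]_n) : Prop :=
  [/\ uniq Phi,
      0 \notin Phi,
      (forall a b, a \in Phi -> b \in Phi -> b *m refl_mx a \in Phi),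
      (forall a b, a \in Phi -> b \in Phi -> 2 * dotv a b / dotv a a \in Num.int) &
      (forall a (c : R), a \in Phi -> c *: a \in Phi -> c = 1 \/ c = -1)].

(* A vector h is regular for Phi if it is orthogonal to no root; the positive
   system determined by h is Phi^+ = {a in Phi | (h,a) > 0}. *)
Definition regular (Phi : seq 'rV[R]_n) (h : 'rV[R]_n) : Prop :=
  forall a, a \in Phi -> dotv h a != 0.

Definition pos_roots (Phi : seq 'rV[R]_n) (h : 'rV[R]_n) : seq 'rV[R]_n :=
  [seq a <- Phi | 0 < dotv h a].

Definition weyl (Phi : seq 'rV[R]_n) (w : 'M[R]_n) : Prop :=
  exists s : seq 'rV[R]_n, all (mem Phi) s /\ w = foldr mulmx 1%:M (map refl_mx s).

Definition ord_eq (b g : 'rV[R]_n) (k : nat) : Prop :=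
  [/\ (0 < k)%N,
      (refl_mx b *m refl_mx g) ^+ k = 1%:M &
      forall j, (0 < j < k)%N -> (refl_mx b *m refl_mx g) ^+ j != 1%:M].

Definition Xrv (Phi : seq 'rV[R]_n) (h : 'rV[R]_n) (b : 'rV[R]_n)
    (w : 'M[R]_n) : nat :=
  nat_of_bool (b *m w \in [seq - a | a <- pos_roots Phi h]).

(* Uniform probability on the finite set enumerated (without repetition) by Wl. *)
Definition unif_prob (Wl : seq 'M[R]_n) (E : pred 'M[R]_n) : R :=
  (count E Wl)%:R / (size Wl)%:R.

(* The families {X_b}_{b in Psi} and {X_g}_{g in Psi'} are independent under
   the uniform distribution on Wl: every event in the sigma-algebra generated by
   the first family (= preimage of a set of value-vectors) is independent of
   every event in the sigma-algebra generated by the second. *)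
Definition indep_families (Wl : seq 'M[R]_n) (X : 'rV[R]_n -> 'M[R]_n -> nat)
    (Psi Psi' : seq 'rV[R]_n) : Prop :=
  forall (F G : seq nat -> bool),
    let A := fun w => F [seq X b w | b <- Psi] in
    let B := fun w => G [seq X g w | g <- Psi'] in
    unif_prob Wl (fun w => A w && B w) = unif_prob Wl A * unif_prob Wl B.

End RootSystems.

From HB Require Import structures.
From mathcomp Require Import all_boot all_order all_algebra.
From mathcomp Require Import reals ring.
Import Order.TTheory GRing.Theory Num.Theory.
Local Open Scope ring_scope.
Set Implicit Arguments. Unset Strict Implicit. Unset Printing Implicit Defensive.

(* Let S2 be the roots orthogonal to Psi and S1 the roots orthogonal to S2.
   Since ord(b, g) = 2 means b and g are orthogonal, Psi lies in S1 and Psi' in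
   S2; moreover S1 and S2 are orthogonal and each is stable under its own
   reflections. The variables X_b, b in Psi, only depend on which roots of S1
   are made negative by w (the S1-pattern of w), and likewise for Psi' and S2.
   Every S1-pattern occurring in W is reached from any w by left
   multiplication with reflections in S1 (each reflection separating the
   patterns brings w^-1 h closer to the target), and such products permute S1
   while fixing S2 pointwise. Hence all nonempty fibres of the pair of patterns
   have the same size, which makes the two patterns, and so the two families,
   independent under the uniform distribution. *)

Section Reflections.
Variables (R : realType) (n : nat).
Implicit Types (u v x y z a b c : 'rV[R]_n).

Lemma dotvC u v : dotv u v = dotv v u.
Proof. by rewrite /dotv -[v *m u^T]trmxK trmx_mul trmxK [in RHS]mxE. Qed.

Lemma dotvDl u v c : dotv (u + v) c = dotv u c + dotv v c.
Proof. by rewrite /dotv mulmxDl mxE. Qed.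

Lemma dotvNl u c : dotv (- u) c = - dotv u c.
Proof. by rewrite /dotv mulNmx mxE. Qed.

Lemma dotvBl u v c : dotv (u - v) c = dotv u c - dotv v c.
Proof. by rewrite dotvDl dotvNl. Qed.

Lemma dotvZl (k : R) u c : dotv (k *: u) c = k * dotv u c.
Proof. by rewrite /dotv -scalemxAl mxE. Qed.

Lemma dotvBr u v c : dotv c (u - v) = dotv c u - dotv c v.
Proof. by rewrite dotvC dotvBl !(dotvC c). Qed.

Lemma dotvNr u c : dotv c (- u) = - dotv c u.
Proof. by rewrite dotvC dotvNl dotvC. Qed.

Lemma dotvZr (k : R) u c : dotv c (k *: u) = k * dotv c u.
Proof. by rewrite dotvC dotvZl dotvC. Qed.

Lemma dotv_mulmx u v (M : 'M[R]_n) : dotv u (v *m M) = dotv (u *m M^T) v.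
Proof. by rewrite /dotv trmx_mul mulmxA. Qed.

Lemma dotv_gt0 u : u != 0 -> 0 < dotv u u.
Proof.
have dotv_sqr : dotv u u = \sum_i u 0 i ^+ 2.
  by rewrite /dotv mxE; apply: eq_bigr => i _; rewrite mxE expr2.
move=> u_neq0; rewrite dotv_sqr lt_def sumr_ge0 ?andbT => [|i _]; last exact: sqr_ge0.
apply: contra u_neq0; rewrite psumr_eq0 => [/allP u0|i _]; last exact: sqr_ge0.
by apply/eqP/rowP => i; rewrite mxE; apply/eqP; rewrite -sqrf_eq0; exact: u0 (mem_index_enum _).
Qed.

Lemma refl_mxE v a : v *m refl_mx a = v - (2 / dotv a a * dotv v a) *: a.
Proof.
rewrite /refl_mx mulmxBr mulmx1 -scalemxAr mulmxA.
by rewrite [v *m a^T]mx11_scalar mul_scalar_mx scalerA.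
Qed.

Lemma tr_refl_mx a : (refl_mx a)^T = refl_mx a.
Proof. by rewrite /refl_mx linearB /= linearZ /= trmx_mul trmxK tr_scalar_mx. Qed.

Lemma refl_mxZ (k : R) a : k != 0 -> refl_mx (k *: a) = refl_mx a.
Proof.
move=> k_neq0; rewrite /refl_mx dotvZl dotvZr [(k *: a)^T]linearZ /=.
rewrite -scalemxAl -scalemxAr !scalerA.
have [->|aa_neq0] := eqVneq (dotv a a) 0; first by rewrite !mulr0 invr0 !mulr0 !mul0r.
by congr (_ - _ *: _); field; rewrite aa_neq0.
Qed.

Lemma refl_mx_orth v a : dotv v a = 0 -> v *m refl_mx a = v.
Proof. by move=> va0; rewrite refl_mxE va0 mulr0 scale0r subr0. Qed.

Lemma refl_mx_self a : a != 0 -> a *m refl_mx a = - a.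
Proof.
move=> a_neq0; rewrite refl_mxE divfK ?gt_eqF ?dotv_gt0 //.
by rewrite scaler_nat mulr2n opprD addrA subrr sub0r.
Qed.

Lemma refl_mxK a v : a != 0 -> v *m refl_mx a *m refl_mx a = v.
Proof.
move=> a_neq0; rewrite [v *m _]refl_mxE mulmxBl -scalemxAl refl_mx_self //.
by rewrite refl_mxE scalerN opprK subrK.
Qed.

Lemma refl_mx_invol a : a != 0 -> refl_mx a *m refl_mx a = 1%:M.
Proof.
move=> a_neq0; apply/row_matrixP => i.
by rewrite -[refl_mx a *m _]mul1mx mulmxA !row_mul refl_mxK.
Qed.

Lemma dotv_refl_mx_orth a c x : dotv a c = 0 -> dotv (x *m refl_mx a) c = dotv x c.
Proof. by move=> ac0; rewrite dotvC dotv_mulmx tr_refl_mx refl_mx_orth 1?dotvC. Qed.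

Lemma refl_dist_lt a y z : a != 0 -> dotv y a * dotv z a < 0 ->
  dotv (y *m refl_mx a - z) (y *m refl_mx a - z) < dotv (y - z) (y - z).
Proof.
move=> a_neq0 yz_lt0; have aa_gt0 : 0 < dotv a a by apply: dotv_gt0.
rewrite refl_mxE addrAC !(dotvBl, dotvBr, dotvZl, dotvZr) (dotvC a y) (dotvC a z).
rewrite (dotvC z y) -subr_lt0.
set p := dotv y a in yz_lt0 *; set q := dotv z a in yz_lt0 *; set d := dotv a a in aa_gt0 *.
(* The reflection changes the squared distance by 4 (y,a)(z,a)/(a,a). *)
set E := (X in X < 0); have -> : E = 4 * (p * q) / d by rewrite /E; field; rewrite gt_eqF.
by rewrite pmulr_llt0 ?invr_gt0 // pmulr_rlt0.
Qed.

Lemma ord_eq2_orth b g : b != 0 -> g != 0 -> ord_eq b g 2 -> dotv g b = 0.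
Proof.
rewrite /ord_eq => b_neq0 g_neq0 [_ sq1 /(_ 1%N isT) ne1].
(* Otherwise (s_b s_g)^2 = 1 makes s_b and s_g commute, so s_g negates b;
   then b is a multiple of g and s_b s_g = s_g^2 = 1. *)
apply/eqP; apply: contraNT ne1 => gb_neq0.
set kb := 2 / dotv b b * dotv g b; set kg := 2 / dotv g g * dotv b g.
have kb_neq0 : kb != 0.
  by rewrite /kb !mulf_eq0 invr_eq0 pnatr_eq0 (gt_eqF (dotv_gt0 b_neq0)) (negPf gb_neq0).
have bg_neg : b *m refl_mx g = - b.
  rewrite expr2 -mulmxE in sq1.
  have := congr1 (mulmx (g *m refl_mx g *m refl_mx b)) sq1.
  rewrite mulmx1 !mulmxA !refl_mxK // refl_mx_self // mulNmx.
  rewrite [g *m refl_mx b]refl_mxE mulmxBl -scalemxAl refl_mx_self //.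
  rewrite -/kb opprB addrC => /addIr /eqP; rewrite eqr_oppLR -scalerN => /eqP.
  exact: scalerI.
have b_par : b = (kg / 2) *: g.
  apply: (@scalerI _ _ 2); first by rewrite pnatr_eq0.
  rewrite scalerA mulrC divfK ?pnatr_eq0 // scaler_nat mulr2n.
  by rewrite -{2}(opprK b) -bg_neg refl_mxE -/kg opprB addrC subrK.
have k_neq0 : kg / 2 != 0 by apply: contraNneq b_neq0 => k0; rewrite b_par k0 scale0r.
by rewrite expr1 b_par refl_mxZ // refl_mx_invol.
Qed.

End Reflections.

Section Counting.
Variable T : eqType.
Implicit Types (s : seq T) (P Q : pred T).

Lemma count_sum_nat s P : count P s = (\sum_(x <- s) P x)%N.
Proof. by rewrite -sum1_count big_mkcond. Qed.

Lemma count_le_inj_map s (f : T -> T) P Q : uniq s -> {in s &, injective f} ->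
  {in s, forall v, P v -> (f v \in s) && Q (f v)} -> (count P s <= count Q s)%N.
Proof.
move=> s_uniq f_inj fPQ; rewrite -!size_filter -(size_map f [seq v <- s | P v]).
apply: uniq_leq_size => [|y /mapP[v]].
  rewrite map_inj_in_uniq ?filter_uniq // => v w.
  by rewrite !mem_filter => /andP[_ vs] /andP[_ ws]; apply: f_inj.
rewrite mem_filter => /andP[Pv vs] ->.
by case/andP: (fPQ v vs Pv) => fvs Qfv; rewrite mem_filter Qfv.
Qed.

Lemma count_lt_mono (R : numDomainType) (d : T -> R) s x y : x \in s -> d x < d y ->
  (count (fun v => d v < d x)%R s < count (fun v => d v < d y)%R s)%N.
Proof.
move=> xs dxy; set P := fun v => d v < d x; set Q := fun v => d v < d y.
have -> : count P s = count P (filter Q s).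
  by rewrite count_filter; apply: eq_count => v; rewrite /= andb_idr // => /lt_trans; apply.
rewrite -[count Q s]size_filter -(count_predC P) -{1}[count P _]addn0 ltn_add2l -has_count.
by apply/hasP; exists x; rewrite ?mem_filter /= /P /Q ?ltxx ?dxy.
Qed.

Lemma sum_nat_fiber (K : eqType) (f : T -> K) (C : pred T) s v :
  v \in s -> {in s &, forall u w, f u = f w -> C u = C w} ->
  (\sum_(u <- s) C u * (f v == f u) = C v * count (fun u => f u == f v) s)%N.
Proof.
move=> vs Cf; rewrite count_sum_nat big_distrr /=; apply: eq_big_seq => u us.
by rewrite eq_sym; case: eqP => [/(Cf _ _ us vs) ->|]; rewrite ?muln0.
Qed.

Section Fibers.
Variables (K1 K2 : eqType) (s : seq T) (f1 : T -> K1) (f2 : T -> K2) (c0 c1 c2 : nat).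
Hypothesis joint_fiber : forall u u', u \in s -> u' \in s ->
  count (fun v => (f1 v == f1 u) && (f2 v == f2 u')) s = c0.
Hypothesis fiber1 : forall u, u \in s -> count (fun v => f1 v == f1 u) s = c1.
Hypothesis fiber2 : forall u, u \in s -> count (fun v => f2 v == f2 u) s = c2.

Lemma count_mul_fibers (A B : pred T) :
  {in s &, forall u v, f1 u = f1 v -> A u = A v} ->
  {in s &, forall u v, f2 u = f2 v -> B u = B v} ->
  (c0 * count A s * count B s = c1 * c2 * count (predI A B) s)%N.
Proof.
(* Both sides count the triples (u, u', v) with A u, B u' and v in the joint
   fibre of u and u'. *)
move=> A_f1 B_f2.
transitivity (\sum_(u <- s) \sum_(u' <- s) \sum_(v <- s)
                A u * (f1 v == f1 u) * (B u' * (f2 v == f2 u')))%N.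
  rewrite -mulnA mulnC !count_sum_nat big_distrlr big_distrl /=; apply: eq_big_seq => u us.
  rewrite big_distrl /=; apply: eq_big_seq => u' u's.
  rewrite -(joint_fiber us u's) count_sum_nat !big_distrr /=; apply: eq_bigr => v _.
  by rewrite -mulnb; ring.
under eq_bigr do rewrite exchange_big /=.
rewrite exchange_big count_sum_nat big_distrr /=; apply: eq_big_seq => v vs.
by rewrite -big_distrlr /= !sum_nat_fiber ?fiber1 ?fiber2 // -mulnb; ring.
Qed.

Lemma count_predI_indep (A B : pred T) : s != [::] ->
  {in s &, forall u v, f1 u = f1 v -> A u = A v} ->
  {in s &, forall u v, f2 u = f2 v -> B u = B v} ->
  (count A s * count B s = size s * count (predI A B) s)%N.
Proof.
move=> s_neq0 A_f1 B_f2.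
have [t ts] : exists t, t \in s by case: s s_neq0 => // t s' _; exists t; rewrite mem_head.
have c0_gt0 : (0 < c0)%N.
  by rewrite -(joint_fiber ts ts) -has_count; apply/hasP; exists t; rewrite ?eqxx.
have pos : (0 < c0 * size s)%N by rewrite muln_gt0 c0_gt0 lt0n size_eq0.
have full := count_mul_fibers (A := predT) (B := predT) (fun _ _ _ _ _ => erefl)
  (fun _ _ _ _ _ => erefl).
rewrite (eq_count (a2 := predT)) // !count_predT in full.
apply/eqP; rewrite -(eqn_pmul2l pos); apply/eqP.
transitivity (size s * (c0 * count A s * count B s))%N; first by ring.
rewrite count_mul_fibers //.
transitivity (c1 * c2 * size s * count (predI A B) s)%N; first by ring.
by rewrite -full; ring.
Qed.

End Fibers.
End Counting.

Section ReflectionProducts.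
Variables (R : realType) (n : nat).
Implicit Types (s : seq 'rV[R]_n).

Definition refl_prod s : 'M[R]_n := foldr mulmx 1%:M (map (@refl_mx R n) s).

Lemma refl_prod1 a : refl_prod [:: a] = refl_mx a.
Proof. exact: mulmx1. Qed.

Lemma refl_prod_cons a s : refl_prod (a :: s) = refl_mx a *m refl_prod s.
Proof. by []. Qed.

Lemma refl_prod_cat s1 s2 : refl_prod (s1 ++ s2) = refl_prod s1 *m refl_prod s2.
Proof.
elim: s1 => [|a s1 IH] /=; first by rewrite mul1mx.
by rewrite !refl_prod_cons IH mulmxA.
Qed.

Lemma refl_prod_revK s : all (fun a => a != 0) s -> refl_prod (rev s) *m refl_prod s = 1%:M.
Proof.
elim: s => [|a s IH] /=; first by rewrite mulmx1.
case/andP=> a_neq0 s_neq0; rewrite rev_cons -cats1 refl_prod_cat refl_prod1 refl_prod_cons.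
by rewrite -mulmxA (mulmxA (refl_mx a)) refl_mx_invol // mul1mx IH.
Qed.

Lemma refl_prod_stable (S P : pred 'rV[R]_n) s x :
  (forall a y, S a -> P y -> P (y *m refl_mx a)) -> all S s -> P x -> P (x *m refl_prod s).
Proof.
move=> SP; elim: s x => [|a s IH] x /=; first by rewrite mulmx1.
by case/andP=> Sa Ss Px; rewrite refl_prod_cons mulmxA; apply: IH => //; apply: SP.
Qed.

End ReflectionProducts.

Section WeylGroup.
Variables (R : realType) (n : nat) (Phi : seq 'rV[R]_n) (h : 'rV[R]_n) (Wl : seq 'M[R]_n).
Hypotheses (Phi_root : root_system Phi) (h_reg : regular Phi h) (Wl_uniq : uniq Wl)
  (Wl_weyl : forall w, w \in Wl <-> weyl Phi w).
Implicit Types (a b c x : 'rV[R]_n) (s S P : seq 'rV[R]_n) (t u v w : 'M[R]_n).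

Lemma root_neq0 a : a \in Phi -> a != 0.
Proof. by case: Phi_root => _ Phi0 _ _ _; apply: contraTneq => ->. Qed.

Lemma root_refl a b : a \in Phi -> b \in Phi -> b *m refl_mx a \in Phi.
Proof. by case: Phi_root => _ _ Phi_refl _ _; apply: Phi_refl. Qed.

Lemma rootN a : a \in Phi -> - a \in Phi.
Proof. by move=> aPhi; rewrite -refl_mx_self ?root_neq0 ?root_refl. Qed.

Lemma Wl1 : 1%:M \in Wl.
Proof. by apply/Wl_weyl; exists [::]. Qed.

Lemma Wl_refl_prod s w : all (mem Phi) s -> w \in Wl -> refl_prod s *m w \in Wl.
Proof.
move=> sPhi /Wl_weyl[s' [s'Phi ->]]; apply/Wl_weyl; exists (s ++ s').
by rewrite all_cat sPhi s'Phi; split=> //; exact/esym/refl_prod_cat.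
Qed.

Lemma root_mulmx_Wl a w : a \in Phi -> w \in Wl -> a *m w \in Phi.
Proof.
move=> aPhi /Wl_weyl[s [sPhi ->]].
by apply: (refl_prod_stable (S := mem Phi)) sPhi aPhi => b y; apply: root_refl.
Qed.

Lemma dotv_root_Wl_neq0 a w : a \in Phi -> w \in Wl -> dotv h (a *m w) != 0.
Proof. by move=> aPhi wW; apply/h_reg/root_mulmx_Wl. Qed.

Lemma XrvE b w : b \in Phi -> w \in Wl -> Xrv Phi h b w = (dotv h (b *m w) < 0).
Proof.
move=> bPhi wW; rewrite /Xrv; congr nat_of_bool; apply/mapP/idP => [[a] | bw_neg].
  by rewrite mem_filter => /andP[ha _] ->; rewrite dotvNr oppr_lt0.
exists (- (b *m w)); last by rewrite opprK.
by rewrite mem_filter rootN ?root_mulmx_Wl // dotvNr oppr_gt0 bw_neg.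
Qed.

Definition neg_pattern S w := [seq dotv h (a *m w) < 0 | a <- S].

Lemma neg_pattern_eq S u v a : neg_pattern S u = neg_pattern S v -> a \in S ->
  (dotv h (a *m u) < 0) = (dotv h (a *m v) < 0).
Proof. by move/eq_in_map; apply. Qed.

(* For w in W, w^T = w^-1: this is the squared distance between w^-1 h and t^-1 h. *)
Definition wdist t w := dotv (h *m w^T - h *m t^T) (h *m w^T - h *m t^T).

Lemma neg_pattern_descent S t w : {subset S <= Phi} -> t \in Wl -> w \in Wl ->
  neg_pattern S w != neg_pattern S t ->
  exists2 a, a \in S & wdist t (refl_mx a *m w) < wdist t w.
Proof.
move=> SPhi tW wW ne_t.
have /hasP[a aS sgn_ne] : has (fun a => (dotv h (a *m w) < 0) != (dotv h (a *m t) < 0)) S.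
  by apply: contraNT ne_t => /hasPn same; apply/eqP/eq_in_map => a /same /negPn /eqP.
exists a => //; rewrite /wdist trmx_mul tr_refl_mx mulmxA.
apply: refl_dist_lt; first exact/root_neq0/SPhi.
by rewrite -!dotv_mulmx neq0_mulr_lt0 ?dotv_root_Wl_neq0 ?SPhi // -negb_eqb.
Qed.

Lemma neg_pattern_reach S t w : {subset S <= Phi} -> t \in Wl -> w \in Wl ->
  exists2 s, all (mem S) s & neg_pattern S (refl_prod s *m w) = neg_pattern S t.
Proof.
move=> SPhi tW; have [k] := ubnP (count (fun v => wdist t v < wdist t w)%R Wl).
elim: k w => // k IH w; rewrite ltnS => w_rank wW.
have [eq_t|ne_t] := eqVneq (neg_pattern S w) (neg_pattern S t).
  by exists [::]; rewrite ?mul1mx.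
have [a aS closer] := neg_pattern_descent SPhi tW wW ne_t.
have aW : refl_mx a *m w \in Wl by rewrite -refl_prod1 Wl_refl_prod //= SPhi.
have [s sS e] := IH _ (leq_trans (count_lt_mono aW closer) w_rank) aW.
exists (rcons s a); first by rewrite all_rcons /= aS.
by rewrite -cats1 refl_prod_cat refl_prod1 -mulmxA.
Qed.

Definition refl_stable S := forall a x, a \in S -> x \in S -> x *m refl_mx a \in S.

Lemma fiber_count_le S1 S2 q u t :
  {subset S1 <= Phi} -> refl_stable S1 ->
  (forall a c, a \in S1 -> c \in S2 -> dotv a c = 0) -> u \in Wl -> t \in Wl ->
  (count (fun v => (neg_pattern S1 v == neg_pattern S1 u) && (neg_pattern S2 v == q)) Wl <=
   count (fun v => (neg_pattern S1 v == neg_pattern S1 t) && (neg_pattern S2 v == q)) Wl)%N.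
Proof.
(* Left multiplication by a product of reflections in S1 carrying the S1-pattern
   of u to that of t permutes S1 and fixes S2 pointwise. *)
move=> S1Phi S1_stable S12_orth uW tW.
have [s sS1 e] := neg_pattern_reach S1Phi tW uW.
have sPhi : all (mem Phi) s by apply: sub_all sS1 => a /S1Phi.
apply: (@count_le_inj_map _ _ (mulmx (refl_prod s))) => // [v1 v2 _ _ e12|v vW].
  have := congr1 (mulmx (refl_prod (rev s))) e12.
  by rewrite !mulmxA refl_prod_revK ?mul1mx //; apply: sub_all sPhi => a /root_neq0.
case/andP=> /eqP e1 /eqP e2; rewrite Wl_refl_prod //=; apply/andP; split; apply/eqP.
  rewrite -e; apply/eq_in_map => a aS1 /=; rewrite !mulmxA; apply: neg_pattern_eq e1 _.
  by apply: (refl_prod_stable (S := mem S1)) sS1 aS1 => b x; apply: S1_stable.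
rewrite -e2; apply/eq_in_map => c cS2 /=; rewrite mulmxA.
suff -> : c *m refl_prod s = c by [].
apply/eqP; apply: (refl_prod_stable (S := mem S1) (P := pred1 c)) sS1 (eqxx c).
move=> b x bS1 /eqP ->.
by rewrite /= refl_mx_orth // dotvC S12_orth.
Qed.

Lemma fiber_count_eq S1 S2 q u t :
  {subset S1 <= Phi} -> refl_stable S1 ->
  (forall a c, a \in S1 -> c \in S2 -> dotv a c = 0) -> u \in Wl -> t \in Wl ->
  count (fun v => (neg_pattern S1 v == neg_pattern S1 u) && (neg_pattern S2 v == q)) Wl =
  count (fun v => (neg_pattern S1 v == neg_pattern S1 t) && (neg_pattern S2 v == q)) Wl.
Proof. by move=> *; apply/eqP; rewrite eqn_leq !fiber_count_le. Qed.

Lemma neg_pattern_indep S1 S2 (A B : pred 'M[R]_n) :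
  {subset S1 <= Phi} -> {subset S2 <= Phi} -> refl_stable S1 -> refl_stable S2 ->
  (forall a c, a \in S1 -> c \in S2 -> dotv a c = 0) ->
  {in Wl &, forall u v, neg_pattern S1 u = neg_pattern S1 v -> A u = A v} ->
  {in Wl &, forall u v, neg_pattern S2 u = neg_pattern S2 v -> B u = B v} ->
  (count A Wl * count B Wl = size Wl * count (predI A B) Wl)%N.
Proof.
move=> S1Phi S2Phi S1_stable S2_stable S12_orth.
have S21_orth c a : c \in S2 -> a \in S1 -> dotv c a = 0.
  by move=> cS2 aS1; rewrite dotvC S12_orth.
(* The marginal fibres are the joint fibres with an empty second set of roots. *)
have nil_orth S a c : a \in S -> c \in [::] -> dotv a c = 0 by [].
pose fiber S S' u u' := count (fun v =>
  (neg_pattern S v == neg_pattern S u) && (neg_pattern S' v == neg_pattern S' u')) Wl.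
apply: (count_predI_indep (c0 := fiber S1 S2 1%:M 1%:M)
  (c1 := fiber S1 [::] 1%:M 1%:M) (c2 := fiber S2 [::] 1%:M 1%:M)); last by case: Wl Wl1.
- move=> u u' uW u'W; rewrite /fiber (fiber_count_eq _ S1Phi S1_stable S12_orth uW Wl1).
  rewrite (eq_count (fun v => andbC _ _)) (fiber_count_eq _ S2Phi S2_stable S21_orth u'W Wl1).
  by apply: eq_count => v; rewrite andbC.
- move=> u uW; rewrite /fiber -(fiber_count_eq _ S1Phi S1_stable (nil_orth S1) uW Wl1).
  by apply: eq_count => v; rewrite andbT.
- move=> u uW; rewrite /fiber -(fiber_count_eq _ S2Phi S2_stable (nil_orth S2) uW Wl1).
  by apply: eq_count => v; rewrite andbT.
Qed.

Definition perp P := [seq a <- Phi | all (fun c => dotv a c == 0) P].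

Lemma perp_sub P : {subset perp P <= Phi}.
Proof. by move=> a; rewrite mem_filter => /andP[]. Qed.

Lemma perp_orth P a c : a \in perp P -> c \in P -> dotv a c = 0.
Proof. by rewrite mem_filter => /andP[/allP aP _] /aP /eqP. Qed.

Lemma perp_refl_stable P : refl_stable (perp P).
Proof.
move=> a x aP xP; rewrite mem_filter root_refl ?(perp_sub aP) ?(perp_sub xP) // andbT.
by apply/allP => c cP; rewrite dotv_refl_mx_orth ?(perp_orth aP cP) ?(perp_orth xP cP).
Qed.

Lemma sub_perp_perp P : {subset P <= Phi} -> {subset P <= perp (perp P)}.
Proof.
move=> PPhi b bP; rewrite mem_filter PPhi // andbT.
by apply/allP => c /perp_orth /(_ bP) cb0; rewrite dotvC cb0.
Qed.

Lemma map_Xrv_neg_pattern P S u v : {subset P <= S} -> {subset S <= Phi} ->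
  u \in Wl -> v \in Wl -> neg_pattern S u = neg_pattern S v ->
  [seq Xrv Phi h b u | b <- P] = [seq Xrv Phi h b v | b <- P].
Proof.
move=> PS SPhi uW vW e; apply/eq_in_map => b /PS bS.
by rewrite !XrvE ?SPhi // (neg_pattern_eq e bS).
Qed.

End WeylGroup.

Lemma unif_prob_indep (R : realType) (n : nat) (Wl : seq 'M[R]_n) (A B : pred 'M[R]_n) :
  (count A Wl * count B Wl = size Wl * count (predI A B) Wl)%N ->
  unif_prob Wl (fun w => A w && B w) = unif_prob Wl A * unif_prob Wl B.
Proof.
rewrite /unif_prob => AB; have [->|Wl_neq0] := eqVneq (size Wl) 0%N.
  by rewrite invr0 !mulr0.
by rewrite mulrACA -natrM AB natrM; field; rewrite pnatr_eq0.
Qed.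

Theorem theorem3p4 (R : realType) (n : nat) (Phi : seq 'rV[R]_n)
    (h : 'rV[R]_n) (Wl : seq 'M[R]_n) (Psi Psi' : seq 'rV[R]_n) :
  root_system Phi ->
  regular Phi h ->
  uniq Wl ->
  (forall w, w \in Wl <-> weyl Phi w) ->
  all (mem (pos_roots Phi h)) Psi ->
  all (mem (pos_roots Phi h)) Psi' ->
  (forall b g, b \in Psi -> g \in Psi' -> ord_eq b g 2) ->
  indep_families Wl (Xrv Phi h) Psi Psi'.
Proof.
move=> Phi_root h_reg Wl_uniq Wl_weyl Psi_pos Psi'_pos ord2 F G A B.
have posPhi : {subset pos_roots Phi h <= Phi} by move=> a; rewrite mem_filter => /andP[].
have PsiPhi : {subset Psi <= Phi} by move=> b /(allP Psi_pos) /posPhi.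
have Psi'Phi : {subset Psi' <= Phi} by move=> g /(allP Psi'_pos) /posPhi.
set S2 := perp Phi Psi; set S1 := perp Phi S2.
have S1Phi : {subset S1 <= Phi} := @perp_sub _ _ Phi S2.
have S2Phi : {subset S2 <= Phi} := @perp_sub _ _ Phi Psi.
have PsiS1 : {subset Psi <= S1} by apply: sub_perp_perp.
have Psi'S2 : {subset Psi' <= S2}.
  move=> g gPsi'; rewrite mem_filter Psi'Phi // andbT; apply/allP => b bPsi.
  apply/eqP/ord_eq2_orth; last exact: ord2.
    exact/(root_neq0 Phi_root)/PsiPhi.
  exact/(root_neq0 Phi_root)/Psi'Phi.
apply: unif_prob_indep.
apply: (neg_pattern_indep Phi_root h_reg Wl_uniq Wl_weyl S1Phi S2Phi).
- exact: perp_refl_stable.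
- exact: perp_refl_stable.
- by move=> a c; apply: perp_orth.
- move=> u v uW vW e; congr F.
  exact: (map_Xrv_neg_pattern Phi_root Wl_weyl PsiS1 S1Phi uW vW e).
- move=> u v uW vW e; congr G.
  exact: (map_Xrv_neg_pattern Phi_root Wl_weyl Psi'S2 S2Phi uW vW e).
Qed.
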